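(* Let $n\ge 4$ and $F=\{5,6,\dots,n\}$. Denote the partial conjugations of $W_n$ by $x_{i,D}$ and those of $W_4$ by $y_{i,D}$. The assignment $\varphi_{5^+}:\mathrm{Out}^0(W_n)\to\mathrm{Out}^0(W_4)$ given on generators by $\varphi_{5^+}(x_{i,D})=\mathrm{id}$ if $i\ge 5$ or $D\subseteq F$ or $D^c\subseteq F$, and $\varphi_{5^+}(x_{i,D})=y_{i,D\setminus F}$ otherwise, defines a surjective homomorphism, and the assignment $\psi_{5^+}(y_{i,D})=x_{i,D}$ defines a homomorphism $\psi_{5^+}:\mathrm{Out}^0(W_4)\to\mathrm{Out}^0(W_n)$ with $\varphi_{5^+}\circ\psi_{5^+}=\mathrm{id}$. In particular $\mathrm{Out}^0(W_n)\cong\ker\varphi_{5^+}\rtimes\mathrm{Out}^0(W_4)$ and $\psi_{5^+}$ embeds $\mathrm{Out}^0(W_4)$ as a subgroup of $\mathrm{Out}^0(W_n)$.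
   Context: $W_n=\langle a_1,\dots,a_n\mid a_i^2=1\rangle$, $[n]=\{1,\dots,n\}$. For $i\in[n]$ and nonempty $D\subseteq[n]\setminus\{i\}$, the partial conjugation $x_{i,D}$ sends $a_j\mapsto a_ia_ja_i$ for $j\in D$ and fixes the other generators; $D^c=[n]\setminus(D\cup\{i\})$. $\mathrm{Out}^0(W_n)=\mathrm{Aut}^0(W_n)/\mathrm{Inn}(W_n)$ where $\mathrm{Aut}^0(W_n)$ consists of automorphisms sending each $a_j$ to a conjugate of itself; in it $x_{i,D}=x_{i,D^c}$. Generators are taken as the $x_{i,D}$ with $D$ nonempty and not containing the minimal element $m$ of $[n]\setminus\{i\}$ (i.e. $D\subseteq[n]\setminus\{i,m\}$). With $\widetilde D=D\cup\{i\}$, $\widetilde{D^c}=D^c\cup\{i\}$, a presentation (Mühlherr) of $\mathrm{Out}^0(W_n)$ on these generators has relations: (R1) $x_{i,D}^2=1$; (R2) $x_{i,D}x_{i,D'}=x_{i,(D\cup D')\setminus(D\cap D')}$; (R3) $[x_{i,D_i},x_{j,D_j}]=1$ whenever $\widetilde{D_i}\cap\widetilde{D_j}=\emptyset$, $\widetilde{D_i^c}\cap\widetilde{D_j}=\emptyset$, or $\widetilde{D_i}\cap\widetilde{D_j^c}=\emptyset$. *)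

(* Out^0(W_n) is encoded through Muehlherr's presentation
   (given in the context) as a monoid presentation: words over the letters
   x_{i,D}, modulo the congruence generated by R1, R2, R3.  Since every
   generator is an involution (R1), this monoid is exactly the group
   presented.  Indices: the label k in [n] = {1..n} is the ordinal k-1 : 'I_n. *)
From mathcomp Require Import all_boot.
Set Implicit Arguments. Unset Strict Implicit. Unset Printing Implicit Defensive.

Definition letter (n : nat) := ('I_n * {set 'I_n})%type.

(* the (0-based) minimal element m of [n] \ {i} *)
Definition mnat (i : nat) : nat := if i == 0 then 1 else 0.

(* (i, D) is one of the chosen generators: D nonempty, D ⊆ [n] \ {i, m} *)
Definition valid n (g : letter n) : bool :=
  [&& g.2 != set0, g.1 \notin g.2 & [forall x in g.2, val x != mnat (val g.1)]].

Definition validw n (w : seq (letter n)) : bool := all (@valid n) w.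

Definition Dc n (i : 'I_n) (D : {set 'I_n}) : {set 'I_n} := ~: (i |: D).
Definition tilde n (i : 'I_n) (D : {set 'I_n}) : {set 'I_n} := i |: D.
Definition tildec n (i : 'I_n) (D : {set 'I_n}) : {set 'I_n} := i |: Dc i D.

Definition R3cond n (i : 'I_n) (Di : {set 'I_n}) (j : 'I_n) (Dj : {set 'I_n}) : bool :=
  [|| tilde i Di :&: tilde j Dj == set0,
      tildec i Di :&: tilde j Dj == set0 |
      tilde i Di :&: tildec j Dj == set0].

(* defining relations; [x,y] = 1 is written x y = y x (x, y involutions) *)
Inductive rel n : seq (letter n) -> seq (letter n) -> Prop :=
| rel_R1 (g : letter n) : valid g -> rel [:: g; g] [::]
| rel_R2 (i : 'I_n) (D D' : {set 'I_n}) :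
    valid (i, D) -> valid (i, D') -> D != D' ->
    rel [:: (i, D); (i, D')] [:: (i, (D :\: D') :|: (D' :\: D))]
| rel_R3 (i : 'I_n) (Di : {set 'I_n}) (j : 'I_n) (Dj : {set 'I_n}) :
    valid (i, Di) -> valid (j, Dj) -> R3cond i Di j Dj ->
    rel [:: (i, Di); (j, Dj)] [:: (j, Dj); (i, Di)].

Inductive eqv n : seq (letter n) -> seq (letter n) -> Prop :=
| eqv_refl w : eqv w w
| eqv_sym w1 w2 : eqv w1 w2 -> eqv w2 w1
| eqv_trans w1 w2 w3 : eqv w1 w2 -> eqv w2 w3 -> eqv w1 w3
| eqv_ctx u l r v : validw u -> validw v -> rel l r -> eqv (u ++ l ++ v) (u ++ r ++ v).

(* phi_{5+} on a letter of W_n; F = {5..n} = ordinals >= 4; the empty word is id *)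
Definition phi_letter n (g : letter n) : seq (letter 4) :=
  let: (i, D) := g in
  if [|| 4 <= val i, [forall x in D, 4 <= val x] | [forall x in Dc i D, 4 <= val x]]
  then [::]
  else [:: ((inord (val i) : 'I_4), [set (inord (val x) : 'I_4) | x in D & val x < 4])].

Definition phi n (w : seq (letter n)) : seq (letter 4) := flatten (map (@phi_letter n) w).

Definition psi_letter n (h : 4 <= n) (g : letter 4) : letter n :=
  (widen_ord h g.1, widen_ord h @: g.2).

Definition psi n (h : 4 <= n) (w : seq (letter 4)) : seq (letter n) :=
  map (psi_letter h) w.

(* phi_{5+} and psi_{5+} are computed letter by letter, so both are monoid
   morphisms of words, and it suffices to send each defining relation to a
   consequence of the relations.  Through the injective widening
   w : 'I_4 -> 'I_n, phi acts on the set of a letter by preimage and psi by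
   image; both commute with the sets ~D, ~D^c of R3 and with symmetric
   differences.  The one case of R2 that is not sent to R2 or to a trivial
   identity is x_{i,D} x_{i,D'} with D and D' of equal nonempty trace on
   {1..4}: it is sent to an instance of R1.  Since phi (psi v) = v letter by
   letter, phi splits, and applying phi shows that psi is injective. *)
From Pilot Require Import Defs.
From mathcomp Require Import all_boot.
Set Implicit Arguments. Unset Strict Implicit. Unset Printing Implicit Defensive.

Section Congruence.

Variable n : nat.
Implicit Types u v w l r : seq (letter n).

Lemma eqv_rel l r : Defs.rel l r -> eqv l r.
Proof. by move=> lr; have := @eqv_ctx n [::] l r [::] isT isT lr; rewrite /= !cats0. Qed.

Lemma validw_cat u v : validw (u ++ v) = validw u && validw v.
Proof. exact: all_cat. Qed.

Lemma eqv_cat u v w1 w2 : validw u -> validw v ->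
  eqv w1 w2 -> eqv (u ++ w1 ++ v) (u ++ w2 ++ v).
Proof.
move=> vu vv; elim=> {w1 w2} [w|w1 w2 _|w1 w2 w3 _ e12 _ e23|u' l r v' vu' vv' lr].
- exact: eqv_refl.
- exact: eqv_sym.
- exact: eqv_trans e12 e23.
have := @eqv_ctx n (u ++ u') l r (v' ++ v).
by rewrite !validw_cat vu vu' vv vv' -!catA; apply.
Qed.

End Congruence.

Lemma eqv_morph m n (f : seq (letter m) -> seq (letter n)) :
  {morph f : u v / u ++ v} -> (forall w, validw w -> validw (f w)) ->
  (forall l r, Defs.rel l r -> eqv (f l) (f r)) ->
  forall w1 w2, eqv w1 w2 -> eqv (f w1) (f w2).
Proof.
move=> fM fV fR w1 w2; elim=> {w1 w2} [w|w1 w2 _|w1 w2 w3 _ e12 _ e23|u l r v vu vv lr].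
- exact: eqv_refl.
- exact: eqv_sym.
- exact: eqv_trans e12 e23.
by rewrite !fM; apply: eqv_cat (fV _ vu) (fV _ vv) (fR _ _ lr).
Qed.

Lemma imsetD_inj (aT rT : finType) (f : aT -> rT) (A B : {set aT}) :
  injective f -> f @: (A :\: B) = f @: A :\: f @: B.
Proof.
move=> f_inj; apply/setP => y; rewrite inE.
apply/imsetP/andP => [[x /setDP[xA xB] ->]|[yB /imsetP[x xA yx]]].
  by rewrite mem_imset // imset_f.
by exists x; rewrite // inE xA -(mem_imset B _ f_inj) -yx yB.
Qed.

Lemma symdiff_eq0 (T : finType) (A B : {set T}) :
  (A :\: B :|: B :\: A == set0) = (A == B).
Proof.
apply/eqP/eqP => [AB|->]; last by rewrite setDv setU0.
apply/setP => x; have /setP/(_ x) := AB.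
by rewrite !inE; case: (x \in A); case: (x \in B).
Qed.

Section Injection.

Variables (m n : nat) (f : 'I_m -> 'I_n).
Hypothesis f_inj : injective f.

Lemma preimset_tilde k (D : {set 'I_n}) :
  f @^-1: tilde (f k) D = tilde k (f @^-1: D).
Proof. by apply/setP => x; rewrite !inE (inj_eq f_inj). Qed.

Lemma preimset_tildec k (D : {set 'I_n}) :
  f @^-1: tildec (f k) D = tildec k (f @^-1: D).
Proof. by apply/setP => x; rewrite !inE (inj_eq f_inj). Qed.

Lemma preimset_imset (D : {set 'I_m}) : f @^-1: (f @: D) = D.
Proof. by apply/setP => x; rewrite inE mem_imset. Qed.

Lemma imset_tilde k (D : {set 'I_m}) : tilde (f k) (f @: D) = f @: tilde k D.
Proof. by rewrite /tilde imsetU1. Qed.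

Lemma R3cond_preimset k (D : {set 'I_n}) l E :
  R3cond (f k) D (f l) E -> R3cond k (f @^-1: D) l (f @^-1: E).
Proof.
rewrite /R3cond -!preimset_tilde -!preimset_tildec -!preimsetI.
by case/or3P=> /eqP->; rewrite preimset0 eqxx ?orbT.
Qed.

Lemma imset_setI_eq0 (A : {set 'I_m}) (B : {set 'I_n}) :
  (f @: A :&: B == set0) = (A :&: f @^-1: B == set0).
Proof.
by rewrite !setI_eq0 !disjoints_subset sub_imset_pre -preimsetC.
Qed.

Lemma R3cond_imset k (D : {set 'I_m}) l E :
  R3cond k D l E -> R3cond (f k) (f @: D) (f l) (f @: E).
Proof.
rewrite /R3cond ![tilde (f _) _]imset_tilde [tildec (f k) _ :&: _]setIC.
by rewrite !imset_setI_eq0 !preimset_tildec !preimset_imset [tilde l E :&: _]setIC.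
Qed.

End Injection.

Lemma widen_ord_inj m n (h : m <= n) : injective (widen_ord h).
Proof. by move=> x y /(congr1 val) /= /val_inj. Qed.

Lemma ord_widenP m n (h : m <= n) (i : 'I_n) :
  m <= i \/ exists k : 'I_m, i = widen_ord h k.
Proof.
case: (leqP m i) => [|im]; first by left.
by right; exists (Ordinal im); apply: val_inj.
Qed.

Lemma mnat_lt2 i : mnat i < 2.
Proof. by rewrite /mnat; case: (i == 0). Qed.

Lemma mnat_in_Dc n (i : 'I_n) D :
  valid (i, D) -> exists2 x : 'I_n, x \in Dc i D & val x = mnat i.
Proof.
case/and3P=> /= /set0Pn[x xD] iD /forall_inP Dm.
have mn : mnat i < n.
  case: (ltnP (mnat i) n) => // nm.
  suff xi : x = i by rewrite -xi xD in iD.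
  have n1 : n <= 1 := leq_trans nm (mnat_lt2 i).
  have := leq_trans (ltn_ord x) n1; have := leq_trans (ltn_ord i) n1.
  by rewrite !ltnS !leqn0 => /eqP i0 /eqP x0; apply: val_inj => /=; rewrite x0 i0.
exists (Ordinal mn) => //; rewrite !inE negb_or; apply/andP; split.
  by rewrite -val_eqE /= /mnat; case: (val i).
by apply/negP => /Dm; rewrite eqxx.
Qed.

Lemma valid_symdiff n (i : 'I_n) D D' : valid (i, D) -> valid (i, D') ->
  D != D' -> valid (i, D :\: D' :|: D' :\: D).
Proof.
case/and3P=> /= _ iD /forall_inP Dm /and3P[/= _ iD' /forall_inP D'm] DD'.
rewrite /valid /= symdiff_eq0 DD' !inE (negbTE iD) (negbTE iD') /=.
by apply/forall_inP => x; rewrite !inE => /orP[/andP[_ /Dm]|/andP[_ /D'm]].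
Qed.

Section Widening.

Variables (n : nat) (h : 4 <= n).
Local Notation w := (widen_ord h).
Implicit Types (i : 'I_n) (k : 'I_4) (u l r : seq (letter n)).

Local Notation w_inj := (@widen_ord_inj 4 n h).

Lemma phi_cons (g : letter n) u : phi (g :: u) = phi_letter g ++ phi u.
Proof. by []. Qed.

Lemma phi_pair (a b : letter n) : phi [:: a; b] = phi_letter a ++ phi_letter b.
Proof. by rewrite !phi_cons cats0. Qed.

Lemma phi_cat (u v : seq (letter n)) : phi (u ++ v) = phi u ++ phi v.
Proof. by rewrite /phi map_cat flatten_cat. Qed.

Lemma psi_cat (u v : seq (letter 4)) : psi h (u ++ v) = psi h u ++ psi h v.
Proof. exact: map_cat. Qed.

Lemma proj_preimset (D : {set 'I_n}) :
  [set (inord (val x) : 'I_4) | x in D & val x < 4] = w @^-1: D.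
Proof.
apply/setP => y; rewrite inE; apply/imsetP/idP => [[x /[!inE] /andP[xD x4] ->]|yD].
  by rewrite (_ : w (inord x) = x) //; apply: val_inj; rewrite /= inordK.
exists (w y); first by rewrite inE yD /= ltn_ord.
by apply: val_inj; rewrite /= inordK.
Qed.

Lemma phi_letter_high i D : 4 <= i -> phi_letter (i, D) = [::].
Proof. by rewrite /phi_letter => ->. Qed.

Lemma phi_letter_widen k D : valid (w k, D) ->
  phi_letter (w k, D) = if w @^-1: D == set0 then [::] else [:: (k, w @^-1: D)].
Proof.
move=> vkD; rewrite /phi_letter /= leqNgt ltn_ord /= proj_preimset.
have -> : [forall x in Dc (w k) D, 4 <= val x] = false.
  have [x xDc xm] := mnat_in_Dc vkD.
  apply/negbTE/forall_inPn; exists x => //.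
  by rewrite xm -ltnNge (leq_trans (mnat_lt2 _)).
have -> : [forall x in D, 4 <= val x] = (w @^-1: D == set0).
  apply/forall_inP/eqP => [highD|D0 x xD].
    by apply/setP => y; rewrite !inE; apply/negP => /highD; rewrite /= leqNgt ltn_ord.
  have [//|[y xy]] := ord_widenP h x.
  by move/setP/(_ y): D0; rewrite !inE -xy xD.
by rewrite orbF (_ : inord _ = k) //; apply: val_inj; rewrite /= inordK.
Qed.

Lemma valid_preimset k D : valid (w k, D) -> w @^-1: D != set0 -> valid (k, w @^-1: D).
Proof.
case/and3P => /= _ kD /forall_inP Dm D0; rewrite /valid /= D0 inE kD /=.
by apply/forall_inP => y; rewrite inE => /Dm.
Qed.

Lemma valid_imset k D : valid (k, D) -> valid (w k, w @: D).
Proof.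
case/and3P=> /= D0 kD /forall_inP Dm.
rewrite /valid /= imset_eq0 D0 (mem_imset _ _ w_inj) kD /=.
by apply/forall_inP => _ /imsetP[y yD ->]; apply: Dm.
Qed.

Lemma validw_phi_letter (g : letter n) : valid g -> validw (phi_letter g).
Proof.
case: g => i D vD; have [i4|[k ik]] := ord_widenP h i.
  by rewrite phi_letter_high.
rewrite ik in vD *; rewrite phi_letter_widen //.
by case: ifP => // /negbT D0; rewrite /validw /= valid_preimset.
Qed.

Lemma validw_phi u : validw u -> validw (phi u).
Proof.
elim: u => //= g u IHu /andP[vg vu].
by rewrite phi_cons validw_cat validw_phi_letter // IHu.
Qed.

Lemma validw_psi (v : seq (letter 4)) : validw v -> validw (psi h v).
Proof. by elim: v => //= [[k D]] v IHv /andP[vg vv]; rewrite valid_imset // IHv. Qed.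

Lemma phi_rel l r : Defs.rel l r -> eqv (phi l) (phi r).
Proof.
case=> [[i D] vD | i D D' vD vD' DD' | i Di j Dj vi vj ij].
- rewrite phi_pair; have [i4|[k ik]] := ord_widenP h i.
    by rewrite phi_letter_high //; apply: eqv_refl.
  rewrite ik in vD *; rewrite phi_letter_widen //.
  case: ifP => [_|/negbT D0]; first exact: eqv_refl.
  by apply/eqv_rel/rel_R1/valid_preimset.
- rewrite phi_pair phi_cons; have [i4|[k ik]] := ord_widenP h i.
    by rewrite !phi_letter_high //; apply: eqv_refl.
  have vDD' := valid_symdiff vD vD' DD'.
  rewrite ik in vD vD' vDD' *; rewrite !phi_letter_widen // preimsetU !preimsetD.
  case: (eqVneq (w @^-1: D) set0) => [->|P0]; case: (eqVneq (w @^-1: D') set0) => [->|P'0];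
    rewrite ?set0D ?setD0 ?setU0 ?set0U ?eqxx ?(negbTE P0) ?(negbTE P'0) /=;
    try exact: eqv_refl.
  case: (eqVneq (w @^-1: D) (w @^-1: D')) => [<-|PP'].
    by rewrite setDv setU0 eqxx; apply/eqv_rel/rel_R1/valid_preimset.
  rewrite symdiff_eq0 (negbTE PP'); apply/eqv_rel/rel_R2 => //;
    exact: valid_preimset.
- rewrite !phi_pair.
  have [i4|[k ik]] := ord_widenP h i.
    by rewrite (phi_letter_high _ i4) cats0; apply: eqv_refl.
  have [j4|[k' jk']] := ord_widenP h j.
    by rewrite (phi_letter_high _ j4) cats0; apply: eqv_refl.
  rewrite ik jk' in vi vj ij *; rewrite !phi_letter_widen //.
  case: ifP => [_|/negbT P0]; first by rewrite cats0; apply: eqv_refl.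
  case: ifP => [_|/negbT Q0]; first by apply: eqv_refl.
  apply/eqv_rel/rel_R3; [exact: valid_preimset | exact: valid_preimset |].
  exact: (R3cond_preimset w_inj ij).
Qed.

Lemma psi_rel (l r : seq (letter 4)) : Defs.rel l r -> Defs.rel (psi h l) (psi h r).
Proof.
case=> [[k D] vD | k D D' vD vD' DD' | k Dk k' Dk' vk vk' kk']; rewrite /psi /psi_letter /=.
- exact/rel_R1/valid_imset.
- rewrite imsetU !(imsetD_inj _ _ w_inj).
  apply: rel_R2; [exact: valid_imset | exact: valid_imset |].
  by rewrite (inj_eq (imset_inj w_inj)).
- apply: rel_R3; [exact: valid_imset | exact: valid_imset |].
  exact: (R3cond_imset w_inj kk').
Qed.

Lemma phi_eqv u1 u2 : eqv u1 u2 -> eqv (phi u1) (phi u2).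
Proof. exact: (eqv_morph phi_cat validw_phi phi_rel). Qed.

Lemma psi_eqv (v1 v2 : seq (letter 4)) : eqv v1 v2 -> eqv (psi h v1) (psi h v2).
Proof. by apply: (eqv_morph psi_cat validw_psi) => l r /psi_rel/eqv_rel. Qed.

Lemma phiK (v : seq (letter 4)) : validw v -> phi (psi h v) = v.
Proof.
elim: v => //= [[k D]] v IHv /andP[vD vv].
rewrite phi_cons IHv // /psi_letter phi_letter_widen ?valid_imset //=.
by case/and3P: vD => /= D0 _ _; rewrite (preimset_imset w_inj) (negbTE D0).
Qed.

End Widening.

Theorem mainTheorem5 (n : nat) (h : 4 <= n) :
  (* phi_{5+} sends generators to words in the generators of Out^0(W_4) *)
  (forall g : letter n, valid g -> validw (phi_letter g)) /\
  (* phi_{5+} is a well-defined homomorphism *)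
  (forall w1 w2 : seq (letter n), validw w1 -> validw w2 ->
     eqv w1 w2 -> eqv (phi w1) (phi w2)) /\
  (* phi_{5+} is surjective *)
  (forall v : seq (letter 4), validw v -> exists w : seq (letter n),
     validw w /\ eqv (phi w) v) /\
  (* psi_{5+} sends generators to generators *)
  (forall g : letter 4, valid g -> valid (psi_letter h g)) /\
  (* psi_{5+} is a well-defined homomorphism *)
  (forall v1 v2 : seq (letter 4), validw v1 -> validw v2 ->
     eqv v1 v2 -> eqv (psi h v1) (psi h v2)) /\
  (* phi_{5+} o psi_{5+} = id *)
  (forall v : seq (letter 4), validw v -> eqv (phi (psi h v)) v) /\
  (* psi_{5+} is injective (embeds Out^0(W_4)) *)
  (forall v1 v2 : seq (letter 4), validw v1 -> validw v2 ->
     eqv (psi h v1) (psi h v2) -> eqv v1 v2).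
Proof.
split; first exact: validw_phi_letter.
split; first by move=> w1 w2 _ _; apply: phi_eqv.
split.
  move=> v vv; exists (psi h v).
  by rewrite validw_psi ?phiK //; split=> //; apply: eqv_refl.
split; first by case=> k D; apply: valid_imset.
split; first by move=> v1 v2 _ _; apply: psi_eqv.
split; first by move=> v vv; rewrite phiK //; apply: eqv_refl.
by move=> v1 v2 vv1 vv2 /(phi_eqv h); rewrite !phiK.
Qed.
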